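(* Let $\mathcal A$ be a finite set, $\mathcal R$ a finite subset of $F(\mathcal A)$ and $\phi:F(\mathcal A)\to F(\mathcal A)$ a homomorphism. Then there are a finite set $\mathcal B$, a finite set $\mathcal R'\subset F(\mathcal B)$, a monomorphism $\phi':F(\mathcal B)\to F(\mathcal B)$ and an isomorphism $$\rho:\langle t,\mathcal A:\mathcal R,\ t^{-1}at=\phi(a)\ (a\in\mathcal A)\rangle\to\langle t,\mathcal B:\mathcal R',\ t^{-1}bt=\phi'(b)\ (b\in\mathcal B)\rangle.$$ Furthermore, if $q_{\mathcal A}:F(\mathcal A\cup\{t\})\to\langle t,\mathcal A:\mathcal R,\ t^{-1}at=\phi(a)\rangle$ and $q_{\mathcal B}:F(\mathcal B\cup\{t\})\to\langle t,\mathcal B:\mathcal R',\ t^{-1}bt=\phi'(b)\rangle$ are the natural projections, there is an epimorphism $\rho':F(\mathcal A\cup\{t\})\to F(\mathcal B\cup\{t\})$ such that (1) $\rho'(t)=t$; (2) $q_{\mathcal B}\circ\rho'=\rho\circ q_{\mathcal A}$; (3) $\rho'(\mathcal R)=\mathcal R'$, $\rho'(N_{F(\mathcal A)}(\mathcal R))=N_{F(\mathcal B)}(\mathcal R')$ and $\rho'(N_{F(\mathcal A\cup\{t\})}(\mathcal R))=N_{F(\mathcal B\cup\{t\})}(\mathcal R')$.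
   Context: $F(S)$ denotes the free group on a set $S$; for a group $H$ and subset $S$, $N_H(S)$ denotes the normal closure of $S$ in $H$. *)

From mathcomp Require Import all_boot.
Set Implicit Arguments. Unset Strict Implicit. Unset Printing Implicit Defensive.

Section FreeGroup.
Variable A : eqType.

(* a letter is a generator together with an "inverse" flag *)
Definition letter := (A * bool)%type.
Definition linv (x : letter) : letter := (x.1, ~~ x.2).

Definition reduced (w : seq letter) : bool :=
  sorted (fun x y => y != linv x) w.

Definition push (x : letter) (s : seq letter) : seq letter :=
  if s is y :: s' then (if y == linv x then s' else x :: s) else [:: x].
Definition red (w : seq letter) : seq letter := foldr push [::] w.

Lemma reduced_push x s : reduced s -> reduced (push x s).
Proof.
case: s => [|y s] //= Hs.
case: eqP => [_|/eqP Hy].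
  by case: s Hs => //= z s /andP[].
by rewrite /reduced /= Hy.
Qed.

Lemma reduced_red w : reduced (red w).
Proof. by elim: w => [|x w IH] //=; apply: reduced_push. Qed.

Definition FG := {w : seq letter | reduced w}.
Definition fg_one : FG := exist _ [::] isT.
Definition fg_mul (u v : FG) : FG := exist _ (red (val u ++ val v)) (reduced_red _).
Definition fg_inv (u : FG) : FG :=
  exist _ (red (rev (map linv (val u)))) (reduced_red _).
Definition fg_gen (a : A) : FG := exist _ [:: (a, false)] isT.

Inductive ncl (S : FG -> Prop) : FG -> Prop :=
| ncl_base s : S s -> ncl S s
| ncl_one : ncl S fg_one
| ncl_mul u v : ncl S u -> ncl S v -> ncl S (fg_mul u v)
| ncl_inv u : ncl S u -> ncl S (fg_inv u)
| ncl_conj g u : ncl S u -> ncl S (fg_mul (fg_inv g) (fg_mul u g)).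

End FreeGroup.

Arguments fg_one {A}.

Definition is_hom (A B : eqType) (f : FG A -> FG B) : Prop :=
  forall u v, f (fg_mul u v) = fg_mul (f u) (f v).

Definition surj (X Y : Type) (f : X -> Y) : Prop := forall y, exists x, f x = y.

(* natural inclusion F(A) -> F(A ∪ {t}), where t is the extra letter None *)
Definition emb (A : eqType) (u : FG A) : FG (option A) :=
  exist _ (red (map (fun x : letter A => (Some x.1, x.2)) (val u))) (reduced_red _).

Definition tt_gen (A : eqType) : FG (option A) := fg_gen None.

Definition hnn_rels (A : eqType) (R : seq (FG A)) (phi : FG A -> FG A)
  : FG (option A) -> Prop :=
  fun w => (exists2 r, r \in R & w = emb r) \/
           (exists a : A, w = fg_mul (fg_mul (fg_mul (fg_inv (tt_gen A))
                                    (emb (fg_gen a))) (tt_gen A))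
                                  (fg_inv (emb (phi (fg_gen a))))).

(* kernel of the natural projection q : F(A ∪ {t}) -> presented group *)
Definition hnnN (A : eqType) (R : seq (FG A)) (phi : FG A -> FG A) :=
  ncl (hnn_rels R phi).

(* the presented group F/N is represented by words; q(u) = q(v) iff u v^-1 ∈ N *)
Definition peq (A : eqType) (N : FG A -> Prop) (u v : FG A) : Prop :=
  N (fg_mul u (fg_inv v)).

(* f (on representatives) induces an isomorphism F(A)/N -> F(B)/M *)
Definition quot_iso (A B : eqType) (N : FG A -> Prop) (M : FG B -> Prop)
  (f : FG A -> FG B) : Prop :=
  [/\ (forall u v, peq N u v -> peq M (f u) (f v)),
      (forall u v, peq M (f (fg_mul u v)) (fg_mul (f u) (f v))),
      (forall u v, peq M (f u) (f v) -> peq N u v)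
    & (forall y, exists x, peq M (f x) y)].

From mathcomp Require Import all_boot zify.
Set Implicit Arguments. Unset Strict Implicit. Unset Printing Implicit Defensive.

(* Nielsen's method: transforming the images of the generators of F(A) by
   elementary Nielsen moves, which decrease their total length or, at equal
   length, a lexicographic code, one ends either with a trivial image or with
   a Nielsen reduced family, whose elements are freely independent.  Hence an
   endomorphism [phi] of F(A) is injective or factors as [be \o al] through a
   free group F(C) with |C| < |A| and [al] onto.  Recursing on [al \o be]
   gives an epimorphism [pi : F(A) -> F(B)], a homomorphism [sg] and an
   injective [phi'] with [pi \o phi = phi' \o pi], [sg \o phi' = phi \o sg]
   and [sg \o pi = phi^k].  Extended by [t |-> t], [pi] maps the relators of
   the HNN presentation for (R, phi) to those for (pi R, phi'), [sg] maps them
   back, and [sg \o pi] is conjugation by [t^k] modulo the relations, so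
   [pi] induces the isomorphism. *)

Section Words.
Variable A : eqType.
Implicit Types (x y : letter A) (s t u v w : seq (letter A)).

Lemma linvK x : linv (linv x) = x.
Proof. by case: x => a b; rewrite /linv /= negbK. Qed.

Lemma linv_neq x : (linv x == x) = false.
Proof. by case: x => a b; apply/eqP; rewrite /linv /=; case; case: b. Qed.

Lemma eq_linv_gen x y : x.1 = y.1 -> y != linv x -> y = x.
Proof.
case: x => a b; case: y => a' b' /= <-; rewrite /linv /=.
by case: b; case: b' => //; rewrite eqxx.
Qed.

Lemma reduced_cons x s :
  reduced (x :: s) = (if s is y :: _ then y != linv x else true) && reduced s.
Proof. by case: s. Qed.

Lemma reduced_behead x s : reduced (x :: s) -> reduced s.
Proof. by rewrite reduced_cons => /andP[]. Qed.

Lemma reduced_rcons s x : reduced (rcons s x) ->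
  reduced s /\ (if s is h :: t then x != linv (last h t) else true).
Proof. by case: s => [|h t] //; rewrite /reduced /= rcons_path => /andP[-> H]. Qed.

Lemma reduced_cat_cons s x v : reduced (rcons s x) -> reduced v ->
  (if v is y :: _ then y != linv x else true) -> reduced (s ++ x :: v).
Proof.
rewrite /reduced sorted_cat_cons => -> Hv /=.
by case: v Hv => [|y v] //= -> ->.
Qed.

Lemma reduced_nth d w i : reduced w -> i.+1 < size w ->
  nth d w i.+1 != linv (nth d w i).
Proof.
elim: w i => [|x w IH] // [|i] H /=.
  by case: w H {IH} => [|y w] //; rewrite reduced_cons => /andP[].
by move=> Hi; apply: IH => //; apply: reduced_behead H.
Qed.

Lemma push_reduced x s : reduced (x :: s) -> push x s = x :: s.
Proof. by case: s => [|y s] //; rewrite reduced_cons /= => /andP[/negbTE ->]. Qed.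

Lemma red_id s : reduced s -> red s = s.
Proof.
elim: s => [|x s IH] // Hs /=.
by rewrite IH ?push_reduced //; apply: reduced_behead Hs.
Qed.

Lemma push_linvK x s : reduced s -> push x (push (linv x) s) = s.
Proof.
case: s => [|y s] Hs; first by rewrite /= eqxx.
rewrite /= linvK; case: eqP => [<-|/eqP Hy] /=; last by rewrite eqxx.
by case: s Hs => [|z s] //= /andP[/negbTE ->].
Qed.

Lemma reduced_foldr_push s u : reduced s -> reduced (foldr (@push A) s u).
Proof. by move=> Hs; elim: u => [|x u IH] //=; apply: reduced_push. Qed.

Lemma foldr_push_cat s u : reduced (u ++ s) -> foldr (@push A) s u = u ++ s.
Proof.
elim: u => [|x u IH] // H /=.
by rewrite IH ?push_reduced //; apply: reduced_behead H.
Qed.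

Lemma foldr_push_red s u : reduced s -> foldr (@push A) s (red u) = foldr (@push A) s u.
Proof.
move=> Hs; elim: u => [|x u IH] //=; rewrite -IH.
case: (red u) (reduced_red u) => [|y r] //= Hr.
case: eqP => [->|_] //=.
by rewrite push_linvK // reduced_foldr_push.
Qed.

Lemma red_cat u v : red (u ++ v) = foldr (@push A) (red v) u.
Proof. by rewrite /red foldr_cat. Qed.

Lemma red_redl u v : red (red u ++ v) = red (u ++ v).
Proof. by rewrite !red_cat foldr_push_red // reduced_red. Qed.

Lemma red_redr u v : red (u ++ red v) = red (u ++ v).
Proof. by rewrite !red_cat (red_id (reduced_red v)). Qed.

Definition winv s := rev (map (@linv A) s).

Lemma winv_cat s t : winv (s ++ t) = winv t ++ winv s.
Proof. by rewrite /winv map_cat rev_cat. Qed.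

Lemma winvK s : winv (winv s) = s.
Proof. by rewrite /winv map_rev revK -map_comp (eq_map linvK) map_id. Qed.

Lemma size_winv s : size (winv s) = size s.
Proof. by rewrite /winv size_rev size_map. Qed.

Lemma winv_rcons x s : winv (rcons s x) = linv x :: winv s.
Proof. by rewrite /winv map_rcons rev_rcons. Qed.

Lemma winv_drop n s : winv (drop n s) = take (size s - n) (winv s).
Proof. by rewrite /winv map_drop rev_drop size_map. Qed.

Lemma nth_winv d w i : i < size w ->
  nth d (winv w) i = linv (nth d w (size w - i.+1)).
Proof. by move=> Hi; rewrite /winv nth_rev ?size_map // (nth_map d) //; lia. Qed.

Lemma reduced_winv s : reduced s -> reduced (winv s).
Proof.
rewrite /reduced /winv rev_sorted sorted_map; apply: sub_sorted => x y /=.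
by apply: contra => /eqP ->; rewrite linvK.
Qed.

Lemma red_cancel u t : red (u ++ winv u ++ t) = red t.
Proof.
elim: u t => [|x u IH] t //=.
rewrite /winv /= rev_cons -/(winv u) -cats1 -catA (IH ([:: linv x] ++ t)) /=.
by rewrite push_linvK ?reduced_red.
Qed.

Lemma red_cat_winv u : red (u ++ winv u) = [::].
Proof. by rewrite -[u ++ _]cats0 -catA red_cancel. Qed.

Lemma red_winv_cat u : red (winv u ++ u) = [::].
Proof. by rewrite -{2}[u]winvK red_cat_winv. Qed.

End Words.

Section FreeGroupLaws.
Variable A : eqType.
Implicit Types (x : letter A) (u v w : FG A).

Definition fg_letter x : FG A := exist _ [:: x] isT.

Lemma val_fg_mul u v : val (fg_mul u v) = red (val u ++ val v).
Proof. by []. Qed.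

Lemma reduced_val u : reduced (val u).
Proof. exact: valP. Qed.

Lemma val_fg_inv u : val (fg_inv u) = winv (val u).
Proof. by rewrite /= red_id // reduced_winv // reduced_val. Qed.

Lemma fg_mulA u v w : fg_mul u (fg_mul v w) = fg_mul (fg_mul u v) w.
Proof. by apply: val_inj; rewrite !val_fg_mul red_redl red_redr catA. Qed.

Lemma fg_mul1g u : fg_mul fg_one u = u.
Proof. by apply: val_inj; rewrite val_fg_mul red_id // reduced_val. Qed.

Lemma fg_mulg1 u : fg_mul u fg_one = u.
Proof. by apply: val_inj; rewrite val_fg_mul cats0 red_id // reduced_val. Qed.

Lemma fg_mulVg u : fg_mul (fg_inv u) u = fg_one.
Proof. by apply: val_inj; rewrite val_fg_mul val_fg_inv red_winv_cat. Qed.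

Lemma fg_mulgV u : fg_mul u (fg_inv u) = fg_one.
Proof. by apply: val_inj; rewrite val_fg_mul val_fg_inv red_cat_winv. Qed.

Lemma fg_invK u : fg_inv (fg_inv u) = u.
Proof. by apply: val_inj; rewrite !val_fg_inv winvK. Qed.

Lemma fg_mulKg u v : fg_mul (fg_inv u) (fg_mul u v) = v.
Proof. by rewrite fg_mulA fg_mulVg fg_mul1g. Qed.

Lemma fg_mulKVg u v : fg_mul u (fg_mul (fg_inv u) v) = v.
Proof. by rewrite fg_mulA fg_mulgV fg_mul1g. Qed.

Lemma fg_mulgKV u v : fg_mul (fg_mul v (fg_inv u)) u = v.
Proof. by rewrite -fg_mulA fg_mulVg fg_mulg1. Qed.

Lemma fg_mulI u : injective (fg_mul u).
Proof. by move=> v w E; rewrite -[v](fg_mulKg u) E fg_mulKg. Qed.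

Lemma fg_inv_uniq u v : fg_mul u v = fg_one -> v = fg_inv u.
Proof. by move=> E; apply: (@fg_mulI u); rewrite E fg_mulgV. Qed.

Lemma fg_invM u v : fg_inv (fg_mul u v) = fg_mul (fg_inv v) (fg_inv u).
Proof.
by symmetry; apply: fg_inv_uniq; rewrite -fg_mulA (fg_mulA v) fg_mulgV fg_mul1g fg_mulgV.
Qed.

Lemma fg_letter_inv a : fg_letter (a, true) = fg_inv (fg_gen a).
Proof. exact: val_inj. Qed.

Lemma fg_letter_linv x : fg_letter (linv x) = fg_inv (fg_letter x).
Proof. exact: val_inj. Qed.

Lemma fg_letter_ind (P : FG A -> Prop) : P fg_one ->
  (forall x w, P w -> P (fg_mul (fg_letter x) w)) -> forall w, P w.
Proof.
move=> P1 PS [s Hs]; elim: s Hs => [|x s IH] Hs.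
  by rewrite (_ : exist _ _ _ = fg_one) //; apply: val_inj.
have -> : exist _ (x :: s) Hs = fg_mul (fg_letter x) (exist _ s (reduced_behead Hs)).
  by apply: val_inj; rewrite val_fg_mul red_id.
exact: PS.
Qed.

End FreeGroupLaws.

Section Homomorphisms.
Variables A B : eqType.
Implicit Types (f g : FG A -> FG B).

Lemma hom1 f : is_hom f -> f fg_one = fg_one.
Proof. by move=> Hf; apply: (@fg_mulI _ (f fg_one)); rewrite -Hf !fg_mulg1. Qed.

Lemma homV f u : is_hom f -> f (fg_inv u) = fg_inv (f u).
Proof. by move=> Hf; apply: fg_inv_uniq; rewrite -Hf fg_mulgV hom1. Qed.

Lemma hom_letter f x : is_hom f ->
  f (fg_letter x) = if x.2 then fg_inv (f (fg_gen x.1)) else f (fg_gen x.1).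
Proof. by case: x => a [] Hf; rewrite ?fg_letter_inv ?homV. Qed.

Lemma eq_hom f g : is_hom f -> is_hom g ->
  (forall a, f (fg_gen a) = g (fg_gen a)) -> forall w, f w = g w.
Proof.
move=> Hf Hg E; apply: fg_letter_ind; first by rewrite !hom1.
by move=> x w IH; rewrite Hf Hg IH (hom_letter _ Hf) (hom_letter _ Hg) E.
Qed.

Lemma surj_hom f : is_hom f -> (forall b, exists w, f w = fg_gen b) -> surj f.
Proof.
move=> Hf Sf; apply: fg_letter_ind; first by exists fg_one; rewrite hom1.
move=> [b e] v [w <-]; have [y Ey] := Sf b.
exists (fg_mul (if e then fg_inv y else y) w).
by rewrite Hf; case: e; rewrite ?homV // Ey ?fg_letter_inv.
Qed.

End Homomorphisms.

Lemma hom_comp (A B C : eqType) (f : FG A -> FG B) (g : FG B -> FG C) :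
  is_hom f -> is_hom g -> is_hom (fun w => g (f w)).
Proof. by move=> Hf Hg u v; rewrite Hf Hg. Qed.

Lemma hom_iter (A : eqType) (f : FG A -> FG A) n : is_hom f -> is_hom (iter n f).
Proof. by move=> Hf; elim: n => [|n IH] u v //=; rewrite IH Hf. Qed.

Section Extension.
Variables (A B : eqType) (f : A -> FG B).

Definition ext_letter (x : letter A) : seq (letter B) :=
  if x.2 then winv (val (f x.1)) else val (f x.1).

Definition ext_word (s : seq (letter A)) := flatten (map ext_letter s).

Lemma reduced_ext_letter x : reduced (ext_letter x).
Proof. by rewrite /ext_letter; case: ifP => _; rewrite ?reduced_winv ?reduced_val. Qed.

Lemma ext_letter_linv x : ext_letter (linv x) = winv (ext_letter x).
Proof. by case: x => a [] //=; rewrite /ext_letter /= winvK. Qed.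

Lemma red_ext_word_push x r : reduced r ->
  red (ext_word (push x r)) = red (ext_word (x :: r)).
Proof.
case: r => [|y r] // _ /=; case: eqP => [->|] //.
by rewrite /ext_word /= ext_letter_linv catA -catA red_cancel.
Qed.

Lemma red_ext_word s : red (ext_word (red s)) = red (ext_word s).
Proof.
elim: s => [|x s IH] //.
rewrite [red (x :: s)]/= red_ext_word_push ?reduced_red //.
by rewrite /ext_word /= -red_redr -/(ext_word _) IH red_redr.
Qed.

Definition fg_ext (w : FG A) : FG B := exist _ (red (ext_word (val w))) (reduced_red _).

Lemma fg_ext_hom : is_hom fg_ext.
Proof.
move=> u v; apply: val_inj; rewrite /= red_ext_word red_redl red_redr.
by rewrite /ext_word map_cat flatten_cat.
Qed.

Lemma fg_ext_gen a : fg_ext (fg_gen a) = f a.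
Proof. by apply: val_inj; rewrite /= /ext_word /= cats0 /ext_letter red_id // reduced_val. Qed.

Lemma val_fg_ext_letter x : val (fg_ext (fg_letter x)) = ext_letter x.
Proof. by rewrite /= /ext_word /= cats0 red_id // reduced_ext_letter. Qed.

End Extension.

Lemma hom_fg_ext (A B : eqType) (f : FG A -> FG B) : is_hom f ->
  forall w, f w = fg_ext (fun a => f (fg_gen a)) w.
Proof. by move=> Hf; apply: eq_hom => // [|a]; [apply: fg_ext_hom | rewrite fg_ext_gen]. Qed.

Lemma fg_ext_letter (A B : eqType) (f : A -> FG B) x :
  fg_ext f (fg_letter x) = if x.2 then fg_inv (f x.1) else f x.1.
Proof. by rewrite (hom_letter _ (fg_ext_hom _)) fg_ext_gen. Qed.

Lemma fg_ext_comp (A B C : eqType) (f : A -> FG B) (g : B -> FG C) w :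
  fg_ext (fun a => fg_ext g (f a)) w = fg_ext g (fg_ext f w).
Proof.
apply: (@eq_hom _ _ _ (fun w => fg_ext g (fg_ext f w))) => [||a]; first exact: fg_ext_hom.
  by apply: hom_comp; apply: fg_ext_hom.
by rewrite !fg_ext_gen.
Qed.

Section NormalClosure.
Variables (A : eqType) (S : FG A -> Prop).
Notation N := (ncl S).
Implicit Types (u v w g : FG A).

Lemma ncl_conjr g u : N u -> N (fg_mul g (fg_mul u (fg_inv g))).
Proof. by move=> H; have := ncl_conj (fg_inv g) H; rewrite fg_invK. Qed.

Lemma peq_refl u : peq N u u.
Proof. by rewrite /peq fg_mulgV; apply: ncl_one. Qed.

Lemma peq_sym u v : peq N u v -> peq N v u.
Proof. by move=> H; have := ncl_inv H; rewrite fg_invM fg_invK. Qed.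

Lemma peq_trans u v w : peq N u v -> peq N v w -> peq N u w.
Proof. by move=> H1 H2; have := ncl_mul H1 H2; rewrite -fg_mulA fg_mulKg. Qed.

Lemma peq_mul u1 v1 u2 v2 : peq N u1 v1 -> peq N u2 v2 ->
  peq N (fg_mul u1 u2) (fg_mul v1 v2).
Proof.
move=> H1 H2; have := ncl_mul H1 (ncl_conjr v1 H2).
by rewrite -!fg_mulA fg_mulKg /peq fg_invM -!fg_mulA.
Qed.

Lemma peq_inv u v : peq N u v -> peq N (fg_inv u) (fg_inv v).
Proof. by move=> /peq_sym H; have := ncl_conj u H; rewrite /peq fg_invK fg_mulgKV. Qed.

Lemma peq_ncl u v : peq N u v -> N v -> N u.
Proof. by move=> H1 H2; have := ncl_mul H1 H2; rewrite fg_mulgKV. Qed.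

End NormalClosure.

Lemma peq_hom (A B : eqType) (S : FG B -> Prop) (f g : FG A -> FG B) :
  is_hom f -> is_hom g -> (forall a, peq (ncl S) (f (fg_gen a)) (g (fg_gen a))) ->
  forall w, peq (ncl S) (f w) (g w).
Proof.
move=> Hf Hg E; apply: fg_letter_ind; first by rewrite !hom1 //; apply: peq_refl.
move=> x w IH; rewrite Hf Hg (hom_letter _ Hf) (hom_letter _ Hg); apply: peq_mul => //.
by case: ifP => _; [apply: peq_inv|]; apply: E.
Qed.

Lemma ncl_hom (A B : eqType) (f : FG A -> FG B) (S : FG A -> Prop) (T : FG B -> Prop) :
  is_hom f -> (forall s, S s -> ncl T (f s)) -> forall u, ncl S u -> ncl T (f u).
Proof.
move=> Hf HS u; elim => {u} [s /HS //| |u v _ Hu _ Hv|u _ Hu|g u _ Hu].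
- by rewrite hom1 //; apply: ncl_one.
- by rewrite Hf; apply: ncl_mul.
- by rewrite homV //; apply: ncl_inv.
- by rewrite !Hf homV //; apply: ncl_conj.
Qed.

Lemma ncl_surj (A B : eqType) (f : FG A -> FG B) (S : seq (FG A)) :
  is_hom f -> surj f -> forall v,
  (exists2 w, ncl (fun x => x \in S) w & f w = v) <-> ncl (fun x => x \in map f S) v.
Proof.
move=> Hf Sf v; split.
  case=> w Hw <-; apply: (ncl_hom Hf) Hw => s Hs.
  by apply: ncl_base; apply: map_f.
elim=> {v} [s /mapP[w Hw ->]| |u v _ [u' Hu' <-] _ [v' Hv' <-]|u _ [u' Hu' <-]|g u _ [u' Hu' <-]].
- by exists w => //; apply: ncl_base.
- by exists fg_one; [apply: ncl_one | apply: hom1].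
- by exists (fg_mul u' v'); [apply: ncl_mul | rewrite Hf].
- by exists (fg_inv u'); [apply: ncl_inv | rewrite homV].
- have [g' <-] := Sf g.
  by exists (fg_mul (fg_inv g') (fg_mul u' g')); [apply: ncl_conj | rewrite !Hf homV].
Qed.

Section Cancellation.
Variable A : eqType.
Implicit Types (x y : letter A) (s t u v w : seq (letter A)).

Fixpoint lcp s t : nat :=
  match s, t with
  | x :: s', y :: t' => if x == y then (lcp s' t').+1 else 0
  | _, _ => 0
  end.

Definition canc u v := lcp (winv u) v.

Lemma lcp_refl s : lcp s s = size s.
Proof. by elim: s => [|x s IH] //=; rewrite eqxx IH. Qed.

Lemma lcp_size s t : lcp s t <= size s /\ lcp s t <= size t.
Proof. by elim: s t => [|x s IH] [|y t] //=; case: ifP => // _; have [] := IH t. Qed.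

Lemma lcp_take s t : take (lcp s t) s = take (lcp s t) t.
Proof. by elim: s t => [|x s IH] [|y t] //=; case: ifP => // /eqP -> /=; rewrite IH. Qed.

Lemma lcp_take_cat s t r k : lcp s t < k -> k <= size s -> lcp (take k s ++ r) t = lcp s t.
Proof.
by elim: s t k => [|x s IH] [|y t] [|k] //=; case: ifP => // _ H1 H2; rewrite IH.
Qed.

Lemma red_cat_canc u v : reduced u -> reduced v ->
  red (u ++ v) = take (size u - canc u v) u ++ drop (canc u v) v.
Proof.
elim/last_ind: u v => [|u x IH] v Hu Hv; first by rewrite /canc /= drop0 red_id.
have [Hu' _] := reduced_rcons Hu.
rewrite /canc winv_rcons cat_rcons red_cat /= (red_id Hv).
case: v Hv => [|y v] Hv /=; first by rewrite subn0 take_size cats0 foldr_push_cat cats1.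
rewrite [linv x == y]eq_sym; case: eqP => [E|/eqP NE] /=; last first.
  by rewrite subn0 take_size foldr_push_cat ?cat_rcons // reduced_cat_cons.
have Hv' := reduced_behead Hv.
rewrite -(red_id Hv') -red_cat IH // (red_id Hv') -/(canc u v).
by rewrite size_rcons subSS -cats1 takel_cat // leq_subr.
Qed.

Lemma size_red_cat u v : reduced u -> reduced v ->
  size (red (u ++ v)) = size u + size v - 2 * canc u v.
Proof.
move=> Hu Hv; rewrite red_cat_canc // size_cat size_take size_drop.
have [H1 H2] := lcp_size (winv u) v; rewrite size_winv in H1.
rewrite /canc; case: ltnP => H; lia.
Qed.

(* A nonempty reduced word cannot cancel against itself beyond its middle
   letter, which would have to be its own inverse. *)
Lemma canc_self_lt w : reduced w -> w != [::] -> 2 * canc w w < size w.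
Proof.
move=> Hw Hn; rewrite ltnNge; apply/negP => Hc.
have [d _] : exists d : letter A, True by case: (w) Hn => [|d ?] //; exists d.
set c := canc w w in Hc.
have Ht := lcp_take (winv w) w; rewrite -/(canc w w) -/c in Ht.
have [Hc1 _] := lcp_size (winv w) w; rewrite -/(canc w w) -/c size_winv in Hc1.
have Hpos : 0 < size w by rewrite lt0n size_eq0.
have mirror i : i < c -> nth d w i = linv (nth d w (size w - i.+1)).
  by move=> Hi; rewrite -nth_winv; [rewrite -(nth_take d Hi) -Ht nth_take | lia].
have := divn_eq (size w) 2; have := ltn_pmod (size w) (isT : 0 < 2).
set h := size w %/ 2; case: (size w %% 2) => [|[|]] // _ E.
  have := mirror h.-1 ltac:(lia); have -> : size w - h.-1.+1 = h by lia.
  have := reduced_nth d Hw (i := h.-1) ltac:(lia).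
  by rewrite prednK; [move=> + E2; rewrite E2 linvK eqxx | lia].
have := mirror h ltac:(lia); have -> : size w - h.+1 = h by lia.
by move/eqP; rewrite eq_sym linv_neq.
Qed.

End Cancellation.

Section NielsenReduced.
Variables (A B : eqType) (f : A -> FG B).
Notation Y := (ext_letter f).

Definition canc_ext (x y : letter A) := canc (Y x) (Y y).

Hypothesis ext_letter_gt0 : forall x, 0 < size (Y x).
Hypothesis canc_ext_half : forall x y, y != linv x ->
  2 * canc_ext x y <= size (Y x) /\ 2 * canc_ext x y <= size (Y y).
Hypothesis canc_ext_short : forall x y z, y != linv x -> z != linv y ->
  canc_ext x y + canc_ext y z < size (Y y).

Definition canc_last (w : seq (letter A)) x := if w is h :: t then canc_ext (last h t) x else 0.

(* [canc_ext_half] and [canc_ext_short] leave a nonempty middle piece of the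
   image of every letter uncancelled. *)
Lemma red_ext_word_rcons w x : reduced (rcons w x) ->
  exists Q, red (ext_word f (rcons w x)) = Q ++ drop (canc_last w x) (Y x).
Proof.
elim/last_ind: w x => [|w y IH] x H.
  by exists [::]; rewrite /ext_word /= cats0 (red_id (reduced_ext_letter f x)) drop0.
have [Hwy Hxy] := reduced_rcons H.
have [Q EQ] := IH y Hwy.
rewrite /ext_word map_rcons flatten_rcons -red_redl -/(ext_word f _) EQ.
have HQ : reduced (Q ++ drop (canc_last w y) (Y y)) by rewrite -EQ reduced_red.
rewrite red_cat_canc // ?reduced_ext_letter //.
have Hlt : canc_ext y x < size (Y y) - canc_last w y.
  rewrite ltn_subRL addnC.
  case: w {IH EQ HQ H} Hwy Hxy => [|h t] Hwy Hxy /=.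
    by rewrite /= in Hxy; have [H1 _] := canc_ext_half Hxy; have := ext_letter_gt0 y; lia.
  have [_ Hyl] := reduced_rcons Hwy; rewrite /= last_rcons in Hxy.
  by rewrite addnC; apply: canc_ext_short.
have -> : canc (Q ++ drop (canc_last w y) (Y y)) (Y x) = canc_ext y x.
  by rewrite /canc winv_cat winv_drop lcp_take_cat ?size_winv ?leq_subr.
have -> : canc_last (rcons w y) x = canc_ext y x by case: (w) => [|h t] //=; rewrite last_rcons.
by eexists.
Qed.

Lemma red_ext_word_nil w : reduced w -> red (ext_word f w) = [::] -> w = [::].
Proof.
case/lastP: w => [|w x] // H; have [Q ->] := red_ext_word_rcons H.
move/(congr1 size); rewrite size_cat size_drop /= => E; exfalso.
suff : canc_last w x < size (Y x) by lia.
case: w H {E} => [|h t] H /=; first exact: ext_letter_gt0.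
have [_ Hl] := reduced_rcons H; rewrite /= in Hl.
by have [_ H2] := canc_ext_half Hl; have := ext_letter_gt0 x; lia.
Qed.

Lemma fg_ext_injective : injective (fg_ext f).
Proof.
move=> u v E; apply: (@fg_mulI _ (fg_inv v)); rewrite fg_mulVg.
apply: val_inj; apply: red_ext_word_nil; first exact: reduced_val.
rewrite -[red _]/(val (fg_ext f (fg_mul (fg_inv v) u))).
by rewrite fg_ext_hom (homV _ (fg_ext_hom f)) E fg_mulVg.
Qed.

End NielsenReduced.

Section Codes.
Variable T : finType.

Definition code_base := #|T|.+1.

Fixpoint code (s : seq T) : nat :=
  if s is x :: s' then enum_rank x * code_base ^ size s' + code s' else 0.

Lemma code_lt s : code s < code_base ^ size s.
Proof.
elim: s => [|x s IH] //=; rewrite expnS.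
have Hr : enum_rank x < code_base by rewrite /code_base ltnS ltnW.
apply: (@leq_trans (enum_rank x * code_base ^ size s + code_base ^ size s)).
  by rewrite ltn_add2l.
by rewrite addnC -mulSn leq_mul2r Hr orbT.
Qed.

Lemma code_cat p r : code (p ++ r) = code p * code_base ^ size r + code r.
Proof. by elim: p => [|x p IH] //=; rewrite IH size_cat expnD mulnDl addnA mulnA. Qed.

Lemma code_inj p q : size p = size q -> code p = code q -> p = q.
Proof.
elim: p q => [|x p IH] [|y q] //= [Es] E.
have Hp := code_lt p; have Hq := code_lt q; rewrite Es in Hp E.
have Hb : 0 < code_base ^ size q by rewrite expn_gt0.
have Ex : enum_rank x = enum_rank y :> nat.
  by have := congr1 (fun n => n %/ code_base ^ size q) E; rewrite !divnMDl // !divn_small // !addn0.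
have Ep : code p = code q.
  by have := congr1 (fun n => n %% code_base ^ size q) E; rewrite !modnMDl !modn_small.
by rewrite (IH q Es Ep) (enum_rank_inj (val_inj Ex)).
Qed.

End Codes.

Section WordOrder.
Variable A : finType.
Implicit Types (p q r s : seq (letter A)).

(* Symmetrised so that a word and its inverse have the same code. *)
Definition icode s := code s + code (winv s).

Definition word_lt s r := size s < size r \/ (size s = size r /\ icode s < icode r).

Lemma icode_winv s : icode (winv s) = icode s.
Proof. by rewrite /icode winvK addnC. Qed.

Lemma word_lt_winv s r : word_lt (winv s) (winv r) <-> word_lt s r.
Proof. by rewrite /word_lt !size_winv !icode_winv. Qed.

Lemma icode_cat_lt p q r : size p = size q -> size p <= size r -> code p < code q ->
  icode (p ++ r) < icode (q ++ r).
Proof.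
move=> Es Hr Hc; rewrite /icode !winv_cat !code_cat !size_winv -Es.
set X := code_base _ ^ size r.
have HXY : code_base (letter A) ^ size p <= X by rewrite leq_pexp2l.
have H1 := code_lt (winv p); rewrite size_winv in H1.
have H2 : code p * X + X <= code q * X by rewrite addnC -mulSn leq_mul2r Hc orbT.
have H3 : code p * X + code (winv p) < code q * X.
  by apply: leq_trans H2; rewrite ltn_add2l; apply: leq_trans H1 HXY.
move: H3; move: (code p * X) (code q * X) (code (winv r) * _) => u v w; lia.
Qed.

(* If [b] cancels exactly half of itself against [a] and the other half
   against [c], then [b = p ++ q] with [a] ending in [p^-1] and [c] starting
   with [q^-1]; as [p <> q^-1], one of [b c] and [a b] has the same length as
   [c] (resp. [a]) and a smaller code. *)
Lemma half_canc_word_lt a b c : reduced a -> reduced b -> reduced c -> 0 < size b ->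
  2 * canc a b <= size a -> 2 * canc a b <= size b ->
  2 * canc b c <= size b -> 2 * canc b c <= size c ->
  size b <= canc a b + canc b c ->
  word_lt (red (b ++ c)) c \/ word_lt (red (a ++ b)) a.
Proof.
move=> Ra Rb Rc Hb0 Ha1 Hb1 Hb2 Hc2 Hsum; set m := canc a b in Ha1 Hb1 Hsum.
have Ebc : canc b c = m by lia.
have Sb : size b = 2 * m by lia.
set p := take m b; set q := drop m b.
have Ebpq : b = p ++ q by rewrite cat_take_drop.
have Sp : size p = m by rewrite size_takel // Sb; lia.
have Sq : size q = m by rewrite /q size_drop Sb; lia.
have Ea : winv a = p ++ drop m (winv a).
  have := lcp_take (winv a) b; rewrite -/(canc a b) -/m => E.
  by rewrite -{1}(cat_take_drop m (winv a)) E.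
have Ec : c = winv q ++ drop m c.
  have := lcp_take (winv b) c; rewrite -/(canc b c) Ebc => E.
  by rewrite -{1}(cat_take_drop m c) -E Ebpq winv_cat take_size_cat // size_winv.
set ra := drop m (winv a) in Ea; set rc := drop m c in Ec.
have Sra : size ra = size a - m by rewrite /ra size_drop size_winv.
have Src : size rc = size c - m by rewrite /rc size_drop.
have Hpq : code p != code (winv q).
  apply/eqP => /code_inj E; have {}E : p = winv q by apply: E; rewrite size_winv Sp Sq.
  have Eb : winv b = b by rewrite Ebpq winv_cat E winvK.
  by have := canc_self_lt Rb; rewrite /canc Eb lcp_refl -size_eq0 -lt0n Hb0 => /(_ isT); lia.
case: (ltngtP (code p) (code (winv q))) Hpq => // Hlt _; [left | right].
  have -> : red (b ++ c) = p ++ rc.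
    by rewrite red_cat_canc // Ebc Sb (_ : 2 * m - m = m) //; lia.
  right; split; first by rewrite size_cat Sp Src; lia.
  by rewrite Ec; apply: icode_cat_lt; rewrite ?size_winv ?Sp ?Sq //; lia.
have Ea' : a = winv ra ++ winv p by rewrite -[a]winvK Ea winv_cat.
have -> : red (a ++ b) = winv ra ++ q.
  rewrite red_cat_canc // -/m {2}Ea' takel_cat ?size_winv ?Sra //.
  by rewrite -Sra -size_winv take_size.
right; split; first by rewrite size_cat size_winv Sra Sq; lia.
rewrite Ea' -icode_winv -[icode (winv ra ++ _)]icode_winv !winv_cat !winvK.
by apply: icode_cat_lt; rewrite ?size_winv ?Sp ?Sq ?Sra //; lia.
Qed.

End WordOrder.

Section NielsenAlternative.
Variables A A' : finType.
Implicit Types (u : A -> FG A').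

Definition inj_or_factors u := injective (fg_ext u) \/ exists C : finType, #|C| < #|A| /\
  exists (al : FG A -> FG C) (be : FG C -> FG A'),
    [/\ is_hom al, surj al, is_hom be & forall w, be (al w) = fg_ext u w].

Lemma inj_or_factors_aut u (t t' : A -> FG A) :
  (forall w, fg_ext t' (fg_ext t w) = w) -> (forall w, fg_ext t (fg_ext t' w) = w) ->
  inj_or_factors (fun a => fg_ext u (t a)) -> inj_or_factors u.
Proof.
move=> K1 K2 [Hi|[C [HC [al [be [Ha Sa Hb Hab]]]]]].
  left=> v w Evw; rewrite -(K2 v) -(K2 w); congr (fg_ext t _); apply: Hi.
  by rewrite !fg_ext_comp !K2.
right; exists C; split=> //; exists (fun w => al (fg_ext t' w)), be; split=> //.
- by apply: hom_comp => //; apply: fg_ext_hom.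
- by move=> y; have [x <-] := Sa y; exists (fg_ext t x); rewrite K1.
- by move=> w; rewrite Hab fg_ext_comp K2.
Qed.

Lemma inj_or_factors_trivial u a0 : val (u a0) = [::] -> inj_or_factors u.
Proof.
move=> H0; right; pose C : finType := {a : A | a != a0}.
exists C; split.
  rewrite card_sig (eq_card (B := predC1 a0)) // cardC1 ltn_predL.
  by apply/card_gt0P; exists a0.
pose al := fg_ext (fun a : A => if (insub a : option C) is Some c then fg_gen c else fg_one).
exists al, (fg_ext (fun c : C => u (val c))); split; try exact: fg_ext_hom.
  apply: surj_hom; first exact: fg_ext_hom.
  by move=> c; exists (fg_gen (val c)); rewrite /al fg_ext_gen valK.
apply: eq_hom => [||a]; first by apply: hom_comp; apply: fg_ext_hom.
  exact: fg_ext_hom.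
rewrite /al !fg_ext_gen; case: insubP => [c _ <-|]; first by rewrite fg_ext_gen.
move/negbNE/eqP => ->; rewrite hom1; last exact: fg_ext_hom.
by apply: val_inj; rewrite H0.
Qed.

Definition nielsen_move (k : A) (s : bool) (y : letter A) : A -> FG A :=
  fun a => if a != k then fg_gen a
           else if s then fg_mul (fg_gen k) (fg_letter y) else fg_mul (fg_letter y) (fg_gen k).

Lemma nielsen_move_id k s y a : a != k -> nielsen_move k s y a = fg_gen a.
Proof. by rewrite /nielsen_move => ->. Qed.

Lemma nielsen_move_mulr k y : nielsen_move k true y k = fg_mul (fg_gen k) (fg_letter y).
Proof. by rewrite /nielsen_move eqxx. Qed.

Lemma nielsen_move_mull k y : nielsen_move k false y k = fg_mul (fg_letter y) (fg_gen k).
Proof. by rewrite /nielsen_move eqxx. Qed.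

Lemma nielsen_moveK k s y : y.1 != k ->
  forall w, fg_ext (nielsen_move k s (linv y)) (fg_ext (nielsen_move k s y) w) = w.
Proof.
move=> Hy; apply: (@eq_hom _ _ _ id) => [||a]; rewrite ?fg_ext_gen //.
  by apply: hom_comp; apply: fg_ext_hom.
have [->|Ha] := eqVneq a k; last by rewrite nielsen_move_id // fg_ext_gen nielsen_move_id.
have fix_y : fg_ext (nielsen_move k s (linv y)) (fg_letter y) = fg_letter y.
  rewrite fg_ext_letter nielsen_move_id //.
  by case: (y) Hy => b [] //= _; rewrite fg_letter_inv.
case: s fix_y => fix_y.
  rewrite nielsen_move_mulr fg_ext_hom fix_y fg_ext_gen nielsen_move_mulr fg_letter_linv.
  by rewrite -fg_mulA fg_mulVg fg_mulg1.
rewrite nielsen_move_mull fg_ext_hom fix_y fg_ext_gen nielsen_move_mull fg_letter_linv.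
by rewrite fg_mulA fg_mulgV fg_mul1g.
Qed.

Lemma inj_or_factors_move u k s y : y.1 != k ->
  inj_or_factors (fun a => fg_ext u (nielsen_move k s y a)) -> inj_or_factors u.
Proof.
move=> Hy; apply: inj_or_factors_aut (nielsen_move k s (linv y)) _ _.
  exact: nielsen_moveK.
by move=> w; rewrite -{1}[y]linvK; apply: nielsen_moveK; case: y Hy.
Qed.

Definition total_size u := \sum_(a : A) size (val (u a)).
Definition total_icode u := \sum_(a : A) icode (val (u a)).

Definition weight_lt u' u := total_size u' < total_size u \/
  (total_size u' = total_size u /\ total_icode u' < total_icode u).

Lemma sum_update (F G : A -> nat) k : (forall a, a != k -> F a = G a) ->
  \sum_(a : A) F a + G k = \sum_(a : A) G a + F k.
Proof.
move=> E; rewrite [\sum_a F a](bigD1 k) // [\sum_a G a](bigD1 k) //=.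
by rewrite (eq_bigr G) => [|a /E]; lia.
Qed.

Lemma weight_lt_update u u' k : (forall a, a != k -> u' a = u a) ->
  word_lt (val (u' k)) (val (u k)) -> weight_lt u' u.
Proof.
move=> E Hk.
have Es : total_size u' + size (val (u k)) = total_size u + size (val (u' k)).
  by apply: sum_update => a /E ->.
have Ei : total_icode u' + icode (val (u k)) = total_icode u + icode (val (u' k)).
  by apply: sum_update => a /E ->.
by rewrite /weight_lt; case: Hk; lia.
Qed.

Section Step.
Variable u : A -> FG A'.
Hypothesis IH : forall u', weight_lt u' u -> inj_or_factors u'.
Notation Y := (ext_letter u).

Lemma inj_or_factors_move_lt k s l : l.1 != k ->
  word_lt (val (fg_ext u (nielsen_move k s l k))) (val (u k)) -> inj_or_factors u.
Proof.
move=> Hl Hlt; apply: (inj_or_factors_move Hl); apply: IH.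
apply: weight_lt_update Hlt => a Ha.
by rewrite nielsen_move_id // fg_ext_gen.
Qed.

Lemma inj_or_factors_prepend x y : x.1 != y.1 ->
  word_lt (red (Y x ++ Y y)) (Y y) -> inj_or_factors u.
Proof.
case: y => b [] Hxy Hlt.
  apply: (@inj_or_factors_move_lt b true (linv x)); first by case: (x) Hxy.
  rewrite nielsen_move_mulr fg_ext_hom fg_ext_gen fg_letter_linv (homV _ (fg_ext_hom u)).
  rewrite -[u b]fg_invK -fg_invM !val_fg_inv word_lt_winv.
  by rewrite val_fg_mul val_fg_ext_letter val_fg_inv.
apply: (@inj_or_factors_move_lt b false x Hxy).
by rewrite nielsen_move_mull fg_ext_hom fg_ext_gen val_fg_mul val_fg_ext_letter.
Qed.

Lemma inj_or_factors_append x y : x.1 != y.1 ->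
  word_lt (red (Y x ++ Y y)) (Y x) -> inj_or_factors u.
Proof.
rewrite eq_sym; case: x => b [] Hxy Hlt.
  apply: (@inj_or_factors_move_lt b false (linv y)); first by case: (y) Hxy.
  rewrite nielsen_move_mull fg_ext_hom fg_ext_gen fg_letter_linv (homV _ (fg_ext_hom u)).
  rewrite -[u b]fg_invK -fg_invM !val_fg_inv word_lt_winv.
  by rewrite val_fg_mul val_fg_ext_letter val_fg_inv.
apply: (@inj_or_factors_move_lt b true y Hxy).
by rewrite nielsen_move_mulr fg_ext_hom fg_ext_gen val_fg_mul val_fg_ext_letter.
Qed.

Lemma gen_neq_of_canc x y : y != linv x -> 0 < size (Y x) ->
  size (Y x) <= 2 * canc_ext u x y \/ size (Y y) <= 2 * canc_ext u x y -> x.1 != y.1.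
Proof.
move=> Hxy Hx H; apply/eqP => /eq_linv_gen /(_ Hxy) Eyx; subst y.
have := canc_self_lt (reduced_ext_letter u x); rewrite -size_eq0 -lt0n Hx => /(_ isT).
by rewrite /canc_ext in H; case: H; lia.
Qed.

(* Either some image is trivial, or a Nielsen move decreases the weight, or
   the images are Nielsen reduced. *)
Lemma inj_or_factors_step : inj_or_factors u.
Proof.
have [/existsP[a /eqP/inj_or_factors_trivial] //|/existsPn Hne] :=
  boolP [exists a, val (u a) == [::]].
have Y_gt0 x : 0 < size (Y x).
  by rewrite /ext_letter; case: ifP; rewrite ?size_winv lt0n size_eq0 Hne.
have [/existsP[x /existsP[y /andP[Hxy Hlong]]]|/existsPn HN1] :=
  boolP [exists x, exists y, (y != linv x) &&
           ((size (Y x) < 2 * canc_ext u x y) || (size (Y y) < 2 * canc_ext u x y))].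
  have Hs := size_red_cat (reduced_ext_letter u x) (reduced_ext_letter u y).
  have Hg : x.1 != y.1.
    by apply: gen_neq_of_canc => //; case/orP: Hlong => H; [left | right]; lia.
  have := Y_gt0 x; have := Y_gt0 y; rewrite /canc_ext in Hlong.
  case/orP: Hlong => H Hx Hy.
    by apply: (inj_or_factors_prepend Hg); left; rewrite Hs; lia.
  by apply: (inj_or_factors_append Hg); left; rewrite Hs; lia.
have N1 x y : y != linv x ->
    2 * canc_ext u x y <= size (Y x) /\ 2 * canc_ext u x y <= size (Y y).
  move=> Hxy; move: (HN1 x) => /existsPn/(_ y).
  by rewrite Hxy /= negb_or -!leqNgt => /andP[].
have [/existsP[x /existsP[y /existsP[z /and3P[Hxy Hyz Hhalf]]]]|/existsPn HN2] :=
  boolP [exists x, exists y, exists z, [&& y != linv x, z != linv y &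
           size (Y y) <= canc_ext u x y + canc_ext u y z]].
  have [Ha Hb] := N1 x y Hxy; have [Hb' Hc] := N1 y z Hyz.
  have [Hlt|Hlt] := half_canc_word_lt (reduced_ext_letter u x) (reduced_ext_letter u y)
    (reduced_ext_letter u z) (Y_gt0 y) Ha Hb Hb' Hc Hhalf.
    by apply: (inj_or_factors_prepend _ Hlt); apply: gen_neq_of_canc Hyz (Y_gt0 y) _; left; lia.
  by apply: (inj_or_factors_append _ Hlt); apply: gen_neq_of_canc Hxy (Y_gt0 x) _; right; lia.
left; apply: fg_ext_injective => // x y z Hxy Hyz.
by move: (HN2 x) => /existsPn/(_ y)/existsPn/(_ z); rewrite Hxy Hyz /= -ltnNge.
Qed.

End Step.

Lemma nielsen_alternative u : inj_or_factors u.
Proof.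
suff H : forall n m v, total_size v < n -> total_icode v < m -> inj_or_factors v.
  exact: (H _ _ u (ltnSn _) (ltnSn _)).
elim=> [|n IHn] // m; elim: m => [|m IHm] // v Hn Hm.
apply: inj_or_factors_step => v' [Hl|[El Hc]].
  by apply: (IHn (total_icode v').+1) => //; lia.
by apply: IHm; lia.
Qed.

End NielsenAlternative.

Definition injective_core (A : finType) (phi : FG A -> FG A) :=
  exists (B : finType) (pi : FG A -> FG B) (sg : FG B -> FG A) (phi' : FG B -> FG B) (k : nat),
    [/\ is_hom pi, surj pi, is_hom sg, is_hom phi' & injective phi'] /\
    [/\ (forall w, phi' (pi w) = pi (phi w)), (forall w, sg (phi' w) = phi (sg w)) &
        (forall w, sg (pi w) = iter k phi w)].

Lemma injective_core_id (A : finType) (phi : FG A -> FG A) :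
  is_hom phi -> injective phi -> injective_core phi.
Proof. by move=> Hphi Iphi; exists A, id, id, phi, 0; split; split => // y; exists y. Qed.

Lemma injective_core_factor (A C : finType) (phi : FG A -> FG A)
    (al : FG A -> FG C) (be : FG C -> FG A) :
  is_hom al -> surj al -> is_hom be -> (forall w, be (al w) = phi w) ->
  injective_core (fun w => al (be w)) -> injective_core phi.
Proof.
move=> Ha Sa Hb Hab [B [pi [sg [phi' [k [[Hpi Spi Hsg Hphi' Iphi'] [C1 C2 C3]]]]]]].
exists B, (fun w => pi (al w)), (fun w => be (sg w)), phi', k.+1; split; split.
- exact: hom_comp.
- by move=> y; have [x <-] := Spi y; have [w <-] := Sa x; exists w.
- exact: hom_comp.
- done.
- done.
- by move=> w; rewrite C1 /= Hab.
- by move=> w; rewrite C2; apply: Hab.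
- move=> w; rewrite C3 iterSr -Hab.
  by elim: k {C3} (al w) => [|j IHj] v //=; rewrite Hab IHj.
Qed.

Lemma injective_core_exists (A : finType) (phi : FG A -> FG A) :
  is_hom phi -> injective_core phi.
Proof.
suff H n (B : finType) (psi : FG B -> FG B) : #|B| < n -> is_hom psi -> injective_core psi.
  exact: H (ltnSn _).
elim: n B psi => // n IH B psi HB Hpsi.
have [Hi|[C [HC [al [be [Ha Sa Hb Hab]]]]]] := nielsen_alternative (fun b => psi (fg_gen b)).
  by apply: injective_core_id => // v w; rewrite !(hom_fg_ext Hpsi) => /Hi.
apply: (injective_core_factor Ha Sa Hb) => [w|]; first by rewrite Hab -hom_fg_ext.
by apply: IH; [lia | apply: hom_comp].
Qed.

Lemma emb_fg_ext (A : eqType) (w : FG A) : emb w = fg_ext (fun a => fg_gen (Some a)) w.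
Proof. by apply: val_inj => /=; congr red; elim: (val w) => [|[a []] s IH] //=; rewrite IH. Qed.

Lemma emb_hom (A : eqType) : is_hom (@emb A).
Proof. by move=> u v; rewrite !emb_fg_ext fg_ext_hom. Qed.

Lemma emb_gen (A : eqType) (a : A) : emb (fg_gen a) = fg_gen (Some a).
Proof. by rewrite emb_fg_ext fg_ext_gen. Qed.

Section HNNLift.
Variables (A B : eqType) (f : FG A -> FG B).

Definition hnn_lift : FG (option A) -> FG (option B) :=
  fg_ext (fun o => if o is Some a then emb (f (fg_gen a)) else tt_gen B).

Lemma hnn_lift_hom : is_hom hnn_lift.
Proof. exact: fg_ext_hom. Qed.

Lemma hnn_lift_t : hnn_lift (tt_gen A) = tt_gen B.
Proof. exact: fg_ext_gen. Qed.

Hypothesis Hf : is_hom f.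

Lemma hnn_lift_emb w : hnn_lift (emb w) = emb (f w).
Proof.
apply: (@eq_hom _ _ (fun w => hnn_lift (emb w)) (fun w => emb (f w))) => [||a].
- by apply: hom_comp; [apply: emb_hom | apply: hnn_lift_hom].
- by apply: hom_comp => //; apply: emb_hom.
- by rewrite emb_gen /hnn_lift fg_ext_gen.
Qed.

Lemma map_hnn_lift_emb (R : seq (FG A)) :
  map hnn_lift (map (@emb A) R) = map (@emb B) (map f R).
Proof. by rewrite -!map_comp; apply: eq_map => r /=; rewrite hnn_lift_emb. Qed.

Hypothesis Sf : surj f.

Lemma hnn_lift_surj : surj hnn_lift.
Proof.
apply: surj_hom; first exact: hnn_lift_hom.
case=> [b|]; last by exists (tt_gen A); rewrite hnn_lift_t.
by have [w Ew] := Sf (fg_gen b); exists (emb w); rewrite hnn_lift_emb Ew emb_gen.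
Qed.

Lemma ncl_hnn_lift_emb (R : seq (FG A)) v :
  (exists2 w, ncl (fun x => x \in R) w & hnn_lift (emb w) = v) <->
  (exists2 u, ncl (fun x => x \in map f R) u & emb u = v).
Proof.
split=> [[w Hw <-]|[u /(ncl_surj _ Hf Sf) [w Hw <-] <-]]; last by exists w; rewrite ?hnn_lift_emb.
by exists (f w); [apply/(ncl_surj _ Hf Sf); exists w | rewrite hnn_lift_emb].
Qed.

End HNNLift.

Section HNNRelations.
Variables (A : eqType) (R : seq (FG A)) (phi : FG A -> FG A).
Hypothesis Hphi : is_hom phi.
Notation N := (hnnN R phi).
Notation t := (tt_gen A).

Definition tconj (x : FG (option A)) := fg_mul (fg_mul (fg_inv t) x) t.

Lemma tconj_hom : is_hom tconj.
Proof. by move=> u v; rewrite /tconj -!fg_mulA fg_mulKVg. Qed.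

Lemma iter_tconj_t k : iter k tconj t = t.
Proof. by elim: k => [|k IH] //=; rewrite IH /tconj fg_mulVg fg_mul1g. Qed.

Lemma ncl_tconj x : N x -> N (tconj x).
Proof. by move=> H; rewrite /tconj -fg_mulA; apply: ncl_conj. Qed.

Lemma tconj_ncl x : N (tconj x) -> N x.
Proof. by move/(ncl_conjr t); rewrite /tconj -!fg_mulA fg_mulKVg fg_mulgV fg_mulg1. Qed.

Lemma peq_tconj_emb w : peq N (tconj (emb w)) (emb (phi w)).
Proof.
apply: (@peq_hom _ _ _ (fun w => tconj (emb w)) (fun w => emb (phi w))) => [||a].
- by apply: hom_comp; [apply: emb_hom | apply: tconj_hom].
- by apply: hom_comp => //; apply: emb_hom.
- by apply: ncl_base; right; exists a.
Qed.

Lemma peq_iter_tconj_emb k w : peq N (iter k tconj (emb w)) (emb (iter k phi w)).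
Proof.
elim: k => [|k IH] /=; first exact: peq_refl.
apply: peq_trans (peq_tconj_emb _).
by apply: peq_mul; [apply: peq_mul => // |]; apply: peq_refl.
Qed.

Lemma ncl_iter_tconj k x : N (iter k tconj x) <-> N x.
Proof. by elim: k => [|k IH] //=; split=> [/tconj_ncl/IH | /IH/ncl_tconj]. Qed.

End HNNRelations.

Section HNNIsomorphism.
Variables (A B : eqType) (R : seq (FG A)) (phi : FG A -> FG A).
Variables (pi : FG A -> FG B) (sg : FG B -> FG A) (phi' : FG B -> FG B) (k : nat).
Hypotheses (Hphi : is_hom phi) (Hpi : is_hom pi) (Hsg : is_hom sg) (Hphi' : is_hom phi').
Hypothesis pi_phi : forall w, phi' (pi w) = pi (phi w).
Hypothesis sg_phi' : forall w, sg (phi' w) = phi (sg w).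
Hypothesis sg_pi : forall w, sg (pi w) = iter k phi w.
Notation N := (hnnN R phi).
Notation N' := (hnnN (map pi R) phi').

Lemma hnn_lift_rels x : N x -> N' (hnn_lift pi x).
Proof.
apply: ncl_hom (hnn_lift_hom pi) _ x => s [[r Hr ->]|[a ->]].
  by rewrite hnn_lift_emb //; apply: ncl_base; left; exists (pi r) => //; apply: map_f.
have := peq_tconj_emb (map pi R) Hphi' (pi (fg_gen a)); rewrite /peq /tconj.
by rewrite !(hnn_lift_hom pi) !(homV _ (hnn_lift_hom pi)) hnn_lift_t !hnn_lift_emb // pi_phi.
Qed.

Lemma hnn_lift_rels_back x : N' x -> N (hnn_lift sg x).
Proof.
apply: ncl_hom (hnn_lift_hom sg) _ x => s [[r' /mapP[r Hr ->] ->]|[b ->]].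
  rewrite hnn_lift_emb // sg_pi; apply: (peq_ncl (peq_sym (peq_iter_tconj_emb R Hphi k r))).
  by apply/ncl_iter_tconj; apply: ncl_base; left; exists r.
have := peq_tconj_emb R Hphi (sg (fg_gen b)); rewrite /peq /tconj.
by rewrite !(hnn_lift_hom sg) !(homV _ (hnn_lift_hom sg)) hnn_lift_t !hnn_lift_emb // sg_phi'.
Qed.

Lemma hnn_lift_comp x : peq N (hnn_lift sg (hnn_lift pi x)) (iter k (@tconj A) x).
Proof.
apply: (@peq_hom _ _ _ (fun x => hnn_lift sg (hnn_lift pi x)) (iter k (@tconj A))) => [||[a|]].
- by apply: hom_comp; apply: hnn_lift_hom.
- exact/hom_iter/tconj_hom.
- by rewrite -emb_gen !hnn_lift_emb // sg_pi; apply/peq_sym/peq_iter_tconj_emb.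
- by rewrite -[fg_gen None]/(tt_gen A) !hnn_lift_t iter_tconj_t; apply: peq_refl.
Qed.

Hypothesis Spi : surj pi.

(* [hnn_lift sg] is an inverse up to conjugation by [t^k], an inner automorphism. *)
Lemma quot_iso_hnn_lift : quot_iso N N' (hnn_lift pi).
Proof.
have Hr := hnn_lift_hom pi; split.
- by move=> u v H; rewrite /peq -(homV _ Hr) -Hr; apply: hnn_lift_rels.
- by move=> u v; rewrite Hr; apply: peq_refl.
- move=> u v; rewrite /peq -(homV _ Hr) -Hr => /hnn_lift_rels_back H.
  by apply/(ncl_iter_tconj _ _ k); apply: peq_ncl H; apply/peq_sym/hnn_lift_comp.
- by move=> y; have [x <-] := hnn_lift_surj Hpi Spi y; exists x; apply: peq_refl.
Qed.

End HNNIsomorphism.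

Theorem lemma4p8 (A : finType) (R : seq (FG A)) (phi : FG A -> FG A) :
  is_hom phi ->
  exists (B : finType) (R' : seq (FG B)) (phi' : FG B -> FG B)
         (rho rho' : FG (option A) -> FG (option B)),
    [/\ is_hom phi', injective phi' &
        quot_iso (hnnN R phi) (hnnN R' phi') rho] /\
    [/\ is_hom rho', surj rho',
        rho' (tt_gen A) = tt_gen B,
        (forall w, peq (hnnN R' phi') (rho' w) (rho w)) &
        [/\ map rho' (map (@emb A) R) =i map (@emb B) R',
            (forall v, (exists2 w, ncl (fun x => x \in R) w & rho' (emb w) = v) <->
                       (exists2 u, ncl (fun x => x \in R') u & emb u = v)) &
            (forall v, (exists2 w, ncl (fun x => x \in map (@emb A) R) w & rho' w = v) <->
                       ncl (fun x => x \in map (@emb B) R') v)]].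
Proof.
move=> Hphi.
have [B [pi [sg [phi' [k [[Hpi Spi Hsg Hphi' Iphi'] [pi_phi sg_phi' sg_pi]]]]]]] :=
  injective_core_exists Hphi.
have Sr := hnn_lift_surj Hpi Spi.
exists B, (map pi R), phi', (hnn_lift pi), (hnn_lift pi); split; split => //.
- exact: (quot_iso_hnn_lift R Hphi Hpi Hsg Hphi' pi_phi sg_phi' sg_pi Spi).
- exact: hnn_lift_hom.
- exact: hnn_lift_t.
- by move=> w; apply: peq_refl.
split=> [|v|v]; first by rewrite map_hnn_lift_emb.
  exact: ncl_hnn_lift_emb.
by rewrite -map_hnn_lift_emb //; apply: (ncl_surj _ (hnn_lift_hom pi) Sr).
Qed.
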